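(* Let $\nu\geq 1$ and $n_d>1$ be integers and let $\boldsymbol{\eta}^1,\ldots,\boldsymbol{\eta}^{n_d}\in\mathbb{R}^\nu$ satisfy $\frac{1}{n_d}\sum_{j=1}^{n_d}\boldsymbol{\eta}^j=\mathbf{0}_\nu$ and $\frac{1}{n_d-1}\sum_{j=1}^{n_d}\boldsymbol{\eta}^j\otimes\boldsymbol{\eta}^j=[I_\nu]$. Set $s=\left(\frac{4}{n_d(2+\nu)}\right)^{1/(\nu+4)}$, $\hat s=s/\sqrt{s^2+(n_d-1)/n_d}$, and $$p_{\mathbf{H}}(\mathbf{y})=\frac{1}{n_d}\sum_{j=1}^{n_d}\frac{1}{(\sqrt{2\pi}\,\hat s)^\nu}\exp\Big(-\frac{1}{2\hat s^2}\Big\|\mathbf{y}-\frac{\hat s}{s}\boldsymbol{\eta}^j\Big\|^2\Big),\quad \mathbf{y}\in\mathbb{R}^\nu .$$ Let $f=\log p_{\mathbf{H}}$, $\mathbf{g}=(g_1,\ldots,g_\nu)=\nabla f$ (so $g_j=\partial f/\partial y_j$), $\hat g=\|\mathbf{g}\|$, and $h=\nabla^2 f=\sum_{j=1}^\nu\partial^2 f/\partial y_j^2$. Let $\mathbf{Y}$ be an $\mathbb{R}^\nu$-valued normalized Gaussian random vector (density $p_{\mathbf{Y}}(\mathbf{y})=(2\pi)^{-\nu/2}e^{-\|\mathbf{y}\|^2/2}$) and $\mathbb{H}=L^2(\mathbb{R}^\nu;p_{\mathbf{Y}}(\mathbf{y})\,d\mathbf{y})$. Then: (i) $f$ is continuous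 on $\mathbb{R}^\nu$ and belongs to $\mathbb{H}$, i.e. $E\{f(\mathbf{Y})^2\}=\|f\|_{\mathbb{H}}^2<+\infty$; (ii) $\mathbf{g}$ is a continuous $\mathbb{R}^\nu$-valued function on $\mathbb{R}^\nu$, each $g_j$ ($j=1,\ldots,\nu$) belongs to $\mathbb{H}$, $\hat g$ belongs to $\mathbb{H}$, and $E\{\hat g(\mathbf{Y})^4\}<+\infty$; (iii) $h$ is a continuous real-valued function on $\mathbb{R}^\nu$ and belongs to $\mathbb{H}$, i.e. $E\{|h(\mathbf{Y})|^2\}=\|h\|_{\mathbb{H}}^2<+\infty$.
   Context: $\mathbb{H}=L^2(\mathbb{R}^\nu;p_{\mathbf{Y}}(\mathbf{y})\,d\mathbf{y})$ is the Hilbert space of real functions on $\mathbb{R}^\nu$ square integrable with respect to the standard Gaussian measure, with inner product $\langle u,v\rangle_{\mathbb{H}}=\int_{\mathbb{R}^\nu}u(\mathbf{y})v(\mathbf{y})p_{\mathbf{Y}}(\mathbf{y})\,d\mathbf{y}=E\{u(\mathbf{Y})v(\mathbf{Y})\}$. The function $p_{\mathbf{H}}$ is the (modified) Gaussian kernel density estimate built from the training points $\boldsymbol{\eta}^j$. *)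

From HB Require Import structures.
From mathcomp Require Import all_boot all_order all_algebra.
From mathcomp Require Import all_classical all_reals all_analysis.
Set Implicit Arguments. Unset Strict Implicit. Unset Printing Implicit Defensive.
Import Order.TTheory GRing.Theory Num.Theory.
Import numFieldNormedType.Exports.
Local Open Scope classical_set_scope.
Local Open Scope ring_scope.

Section Defs.
Variable R : realType.

Definition sqnorm n (y : 'rV[R]_n) : R := \sum_(i < n) (y 0 i) ^+ 2.
Definition enorm n (y : 'rV[R]_n) : R := Num.sqrt (sqnorm y).

(* Iterated Lebesgue integral over R^n of a [0,+oo]-valued function
   (coordinate by coordinate; by Tonelli this is the integral w.r.t. the
   n-dimensional Lebesgue measure for measurable nonnegative integrands). *)
Fixpoint lebesgue_iter (n : nat) : ('rV[R]_n -> \bar R) -> \bar R :=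
  match n with
  | 0 => fun F => F 0
  | n'.+1 => fun F =>
      (\int[@lebesgue_measure R]_(x in [set: R])
          lebesgue_iter (fun v : 'rV[R]_n' => F (row_mx (\row_(k < 1) x) v)))%E
  end.

Definition pY n (y : 'rV[R]_n) : R :=
  ((2 * pi) `^ (- (n%:R / 2))) * expR (- (sqnorm y) / 2).

Definition gauss_expect n (F : 'rV[R]_n -> R) : \bar R :=
  lebesgue_iter (fun y => (F y * pY y)%:E).

Definition in_H n (u : 'rV[R]_n -> R) : Prop :=
  (gauss_expect (fun y => (u y ^+ 2)%R) < +oo)%E.

Definition kde_s (nu nd : nat) : R :=
  (4 / (nd%:R * (2 + nu%:R))) `^ (1 / (nu%:R + 4)).
Definition kde_shat (nu nd : nat) : R :=
  kde_s nu nd / Num.sqrt (kde_s nu nd ^+ 2 + (nd%:R - 1) / nd%:R).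

Definition pH (nu nd : nat) (eta : 'I_nd -> 'rV[R]_nu) (y : 'rV[R]_nu) : R :=
  let s := kde_s nu nd in let sh := kde_shat nu nd in
  nd%:R^-1 * \sum_(j < nd)
     ((Num.sqrt (2 * pi) * sh) ^+ nu)^-1 *
     expR (- (1 / (2 * sh ^+ 2)) * sqnorm (y - (sh / s) *: eta j)).

Definition ebasis nu (j : 'I_nu) : 'rV[R]_nu := delta_mx 0 j.

End Defs.
Arguments ebasis {R nu} j.

From HB Require Import structures.
From mathcomp Require Import all_boot all_order all_algebra.
From mathcomp Require Import all_classical all_reals all_analysis.
From mathcomp Require Import ring lra.
Import Order.TTheory GRing.Theory Num.Theory.
Import numFieldNormedType.Exports.
Local Open Scope classical_set_scope.
Local Open Scope ring_scope.

(* p_H is c times a mixture S(y) = sum_k exp(-a |y - b_k|^2), so f = ln (c S).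
   Each derivative of f is of the form (sum_k p_k(y) exp(-a |y - b_k|^2)) / S(y)
   minus powers of such ratios, with polynomial coefficients p_k; as every
   kernel is at most S, such a ratio is bounded by sum_k |p_k(y)|, hence by
   K (1 + |y|^2)^m.  Similarly exp(-a |y - b_0|^2) <= S <= n_d bounds |f| by an
   affine function of |y|^2.  Finally, a function bounded by K (1 + |y|^2)^m
   has finite Gaussian moments of every order, because
   (1 + |y|^2)^m exp(-|y|^2 / 2) is dominated by a multiple of the density of
   nu independent N(0, 4) variables.  Continuity comes from differentiability. *)

Set Implicit Arguments.
Unset Strict Implicit.

Section PolyBounded.
Variables (R : realType) (n : nat).
Implicit Types (u v : 'rV[R]_n -> R) (y : 'rV[R]_n).

Lemma sqnorm_ge0 y : 0 <= sqnorm y.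
Proof. by apply: sumr_ge0 => i _; exact: sqr_ge0. Qed.

Lemma sqr_coord_le_sqnorm y i : y 0 i ^+ 2 <= sqnorm y.
Proof.
by rewrite /sqnorm (bigD1 i) //= lerDl; apply: sumr_ge0 => k _; exact: sqr_ge0.
Qed.

Definition poly_bounded u :=
  exists K m, forall y, `|u y| <= K * (1 + sqnorm y) ^+ m.

Lemma poly_bound_ge0 u K m :
  (forall y, `|u y| <= K * (1 + sqnorm y) ^+ m) -> 0 <= K.
Proof.
move=> /(_ 0) bound0; rewrite -(@pmulr_lge0 _ ((1 + sqnorm (0 : 'rV[R]_n)) ^+ m)).
  exact: le_trans (normr_ge0 _) bound0.
by rewrite exprn_gt0 // ltr_pwDl // sqnorm_ge0.
Qed.

Lemma eq_poly_bounded u v : u =1 v -> poly_bounded u -> poly_bounded v.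
Proof. by move=> uv [K [m bound]]; exists K, m => y; rewrite -uv. Qed.

Lemma poly_bounded_le u v :
  (forall y, `|u y| <= `|v y|) -> poly_bounded v -> poly_bounded u.
Proof.
by move=> uv [K [m bound]]; exists K, m => y; exact: le_trans (uv y) (bound y).
Qed.

Lemma poly_bounded_norm u : poly_bounded u -> poly_bounded (fun y => `|u y|).
Proof. by apply: poly_bounded_le => y; rewrite normr_id. Qed.

Lemma poly_bounded_cst (c : R) : poly_bounded (fun=> c).
Proof. by exists `|c|, 0%N => y; rewrite expr0 mulr1. Qed.

Lemma poly_bounded_coord i : poly_bounded (fun y => y 0 i).
Proof.
exists 1, 1%N => y; rewrite mul1r expr1.
have := sqr_coord_le_sqnorm y i; rewrite -real_normK ?num_real //.
have := normr_ge0 (y 0 i); nra.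
Qed.

Lemma poly_boundedD u v :
  poly_bounded u -> poly_bounded v -> poly_bounded (fun y => u y + v y).
Proof.
move=> [K [m bu]] [L [k bv]]; exists (K + L), (m + k)%N => y.
have one_le : 1 <= 1 + sqnorm y by rewrite lerDl sqnorm_ge0.
apply: le_trans (ler_normD _ _) _; rewrite mulrDl.
apply: lerD.
- apply: le_trans (bu y) _; apply: ler_wpM2l; first exact: poly_bound_ge0 bu.
  by apply: ler_weXn2l => //; rewrite leq_addr.
- apply: le_trans (bv y) _; apply: ler_wpM2l; first exact: poly_bound_ge0 bv.
  by apply: ler_weXn2l => //; rewrite leq_addl.
Qed.

Lemma poly_boundedN u : poly_bounded u -> poly_bounded (fun y => - u y).
Proof. by apply: poly_bounded_le => y; rewrite normrN. Qed.

Lemma poly_boundedB u v :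
  poly_bounded u -> poly_bounded v -> poly_bounded (fun y => u y - v y).
Proof. by move=> bu bv; apply: poly_boundedD bu (poly_boundedN bv). Qed.

Lemma poly_boundedM u v :
  poly_bounded u -> poly_bounded v -> poly_bounded (fun y => u y * v y).
Proof.
move=> [K [m bu]] [L [k bv]]; exists (K * L), (m + k)%N => y.
rewrite normrM exprD mulrACA.
exact: ler_pM (normr_ge0 _) (normr_ge0 _) (bu y) (bv y).
Qed.

Lemma poly_boundedX u k : poly_bounded u -> poly_bounded (fun y => u y ^+ k).
Proof.
move=> bu; elim: k => [|k IH].
  by apply: (@eq_poly_bounded (fun=> 1)) => [y|]; [rewrite expr0|exact: poly_bounded_cst].
by apply: (eq_poly_bounded _ (poly_boundedM bu IH)) => y; rewrite exprS.
Qed.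

Lemma poly_bounded_sum m (u : 'I_m -> 'rV[R]_n -> R) :
  (forall i, poly_bounded (u i)) -> poly_bounded (fun y => \sum_(i < m) u i y).
Proof.
elim: m u => [|m IH] u bu.
  by apply: (@eq_poly_bounded (fun=> 0)) => [y|]; [rewrite big_ord0|exact: poly_bounded_cst].
apply: (eq_poly_bounded _ (poly_boundedD (IH _ (fun i => bu (widen_ord (leqnSn m) i))) (bu ord_max))).
by move=> y; rewrite big_ord_recr.
Qed.

Lemma poly_bounded_sqnormB (c : 'rV[R]_n) : poly_bounded (fun y => sqnorm (y - c)).
Proof.
apply: (@eq_poly_bounded (fun y => \sum_(i < n) (y 0 i - c 0 i) ^+ 2)).
  by move=> y; apply: eq_bigr => i _; rewrite !mxE.
apply: poly_bounded_sum => i; apply: poly_boundedX.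
exact: poly_boundedB (poly_bounded_coord i) (poly_bounded_cst _).
Qed.

End PolyBounded.

Lemma poly_bounded_sqr_enorm (R : realType) n m (F : 'I_m -> 'rV[R]_n -> R) :
  (forall j, poly_bounded (F j)) -> poly_bounded (fun y => enorm (\row_(j < m) F j y) ^+ 2).
Proof.
move=> F_bnd; apply: (@eq_poly_bounded _ _ (fun y => \sum_(j < m) F j y ^+ 2)).
  by move=> y; rewrite /enorm sqr_sqrtr ?sqnorm_ge0 //; apply: eq_bigr => j _; rewrite mxE.
by apply: poly_bounded_sum => j; exact: poly_boundedX.
Qed.

Section IteratedIntegral.
Variable R : realType.
Local Notation mu := (@lebesgue_measure R).

Lemma row_mx_scalar_ord0 n (x : R) (v : 'rV[R]_n) :
  row_mx (\row_(k < 1) x) v 0 ord0 = x.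
Proof.
have -> : (ord0 : 'I_(1 + n)) = lshift n ord0 by apply/val_inj.
by rewrite row_mxEl mxE.
Qed.

Lemma row_mx_scalar_lift n (x : R) (v : 'rV[R]_n) i :
  row_mx (\row_(k < 1) x) v 0 (lift ord0 i) = v 0 i.
Proof.
have -> : (lift ord0 i : 'I_(1 + n)) = rshift 1 i by apply/val_inj.
by rewrite row_mxEr.
Qed.

Local Open Scope ereal_scope.

Lemma ge0_le_integralT (f g : R -> \bar R) :
  (forall x, 0 <= f x) -> (forall x, f x <= g x) ->
  \int[mu]_(x in [set: R]) f x <= \int[mu]_(x in [set: R]) g x.
Proof.
move=> f0 fg; rewrite !ge0_integralTE //; last by move=> x; exact: le_trans (f0 x) (fg x).
apply: ge_ereal_sup => _ [h hf <-]; apply: ereal_sup_ubound; exists h => // x.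
exact: le_trans (hf x) (fg x).
Qed.

Lemma lebesgue_iter_ge0 n (F : 'rV[R]_n -> \bar R) :
  (forall y, 0 <= F y) -> 0 <= lebesgue_iter F.
Proof.
elim: n F => [|n IH] F F0 /=; first exact: F0.
by apply: integral_ge0 => x _; apply: IH => v; exact: F0.
Qed.

(* Integrating out one coordinate at a time only uses monotonicity of the
   integral of nonnegative functions: no measurability of [F] is required. *)
Lemma lebesgue_iter_le_prod_density (p : R -> R) n (F : 'rV[R]_n -> R) (C : R) :
  (forall x, 0 <= p x)%R -> mu.-integrable [set: R] (EFin \o p) ->
  \int[mu]_x (p x)%:E = 1 ->
  (0 <= C)%R -> (forall y, 0 <= F y)%R ->
  (forall y, F y <= C * \prod_(i < n) p (y 0 i))%R ->
  lebesgue_iter (fun y => (F y)%:E) <= C%:E.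
Proof.
move=> p0 p_int p1; elim: n F C => [|n IH] F C C0 F0 FC /=.
  by rewrite lee_fin; have := FC 0%R; rewrite big_ord0 mulr1.
apply: (@le_trans _ _ (\int[mu]_(x in [set: R]) (C * p x)%:E)).
  apply: ge0_le_integralT => x.
    by apply: lebesgue_iter_ge0 => v; rewrite lee_fin F0.
  apply: IH => [|v|v]; [exact: mulr_ge0 | exact: F0 |].
  have := FC (row_mx (\row_(k < 1) x) v).
  rewrite big_ord_recl row_mx_scalar_ord0 mulrA.
  by under eq_bigr do rewrite row_mx_scalar_lift.
under eq_integral do rewrite EFinM.
by rewrite integralZl // p1 mule1.
Qed.

End IteratedIntegral.

Section GaussianMoments.
Variables (R : realType) (n : nat).
Implicit Types (u : 'rV[R]_n -> R) (y : 'rV[R]_n).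

Lemma prod_normal_pdf y :
  \prod_(i < n) normal_pdf 0 2 (y 0 i) = normal_peak (2 : R) ^+ n * expR (- (sqnorm y / 8)).
Proof.
have normal2E x : normal_pdf 0 2 x = normal_peak (2 : R) * expR (- (x ^+ 2 / 8)).
  rewrite normal_pdfE ?pnatr_eq0 //= /normal_fun subr0 mulNr.
  by congr (_ * expR (- (_ / _))); rewrite -natrX -mulr_natr -natrM.
under eq_bigr do rewrite normal2E.
rewrite big_split /= prodr_const card_ord; congr (_ * _).
by rewrite /sqnorm mulr_suml -sumrN expR_sum.
Qed.

(* The polynomial is absorbed into the Gaussian at the price of a wider
   variance, using [1 + Q <= L expR (Q / L)] with [L = 4 (m + 1)]. *)
Lemma poly_expR_le (Q : R) (m : nat) : 0 <= Q ->
  (1 + Q) ^+ m * expR (- Q / 2) <= (4 * m.+1%:R) ^+ m * expR (- (Q / 8)).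
Proof.
move=> Q0; set L : R := 4 * m.+1%:R.
have m1 : 1 <= m.+1%:R :> R by rewrite ler1n.
have L1 : 1 <= L by rewrite /L; lra.
have L0 : 0 < L by lra.
have lin_exp : 1 + Q <= L * expR (Q / L).
  apply: (@le_trans _ _ (L * (1 + Q / L))); last by rewrite ler_pM2l // expR_ge1Dx.
  by rewrite mulrDr mulr1 mulrCA divff ?gt_eqF // mulr1; lra.
have pow_exp : (1 + Q) ^+ m <= L ^+ m * expR (m%:R * (Q / L)).
  by rewrite expRM_natl -exprMn; apply: lerXn2r => //; rewrite nnegrE; lra.
apply: le_trans (ler_wpM2r (expR_ge0 _) pow_exp) _.
rewrite -mulrA; apply: ler_wpM2l; first by rewrite exprn_ge0 // ltW.
rewrite -expRD ler_expR.
have t1 : m%:R / m.+1%:R <= 1 :> R by rewrite ler_pdivrMr ?ltr0n // mul1r ler_nat.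
have -> : m%:R * (Q / L) = Q * (m%:R / m.+1%:R) / 4 by rewrite /L invfM; ring.
move: t1; set t := m%:R / m.+1%:R; nra.
Qed.

Lemma gauss_expect_lty u : poly_bounded u -> (forall y, 0 <= u y) ->
  (gauss_expect u < +oo)%E.
Proof.
move=> [K [m bound]] u0; rewrite /gauss_expect.
have K0 := poly_bound_ge0 bound.
set c : R := (2 * pi) `^ (- (n%:R / 2)).
have c0 : 0 < c by rewrite powR_gt0 // mulr_gt0 ?pi_gt0.
have peak0 : 0 < normal_peak (2 : R) by apply: normal_peak_gt0; rewrite pnatr_eq0.
set L : R := 4 * m.+1%:R.
set C : R := K * c * L ^+ m / normal_peak (2 : R) ^+ n.
have L0 : 0 <= L by rewrite /L mulr_ge0 ?ler0n.
have C0 : 0 <= C.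
  apply: mulr_ge0; last by rewrite invr_ge0 exprn_ge0 // ltW.
  by apply: mulr_ge0; [exact: mulr_ge0 K0 (ltW c0) | exact: exprn_ge0].
apply: le_lt_trans (ltry C); apply: (lebesgue_iter_le_prod_density (p := normal_pdf 0 2)).
- exact: normal_pdf_ge0.
- exact: integrable_normal_pdf.
- exact: integral_normal_pdf.
- exact: C0.
- by move=> y; rewrite /pY mulr_ge0 // mulr_ge0 ?expR_ge0 ?powR_ge0.
move=> y; rewrite prod_normal_pdf /C -mulrA mulKf ?expf_neq0 ?gt_eqF //.
have pY0 : 0 <= pY y by rewrite /pY mulr_ge0 ?expR_ge0 ?ltW.
apply: le_trans (ler_wpM2r pY0 (le_trans (ler_norm _) (bound y))) _.
rewrite /pY -/c -[K * c * _ * _]mulrA.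
rewrite (_ : _ * _ * (c * _) = K * c * ((1 + sqnorm y) ^+ m * expR (- sqnorm y / 2))); last by ring.
by apply: ler_wpM2l; [exact: mulr_ge0 K0 (ltW c0) | exact: poly_expR_le (sqnorm_ge0 y)].
Qed.

Lemma in_H_poly_bounded u : poly_bounded u -> in_H u.
Proof. by move=> bu; apply: gauss_expect_lty (poly_boundedX 2 bu) _ => y; exact: sqr_ge0. Qed.

End GaussianMoments.

Section DirectionalDerivatives.
Variables (R : realType) (V : normedModType R).
Implicit Types (u : V -> R) (x v : V).

Lemma derive_line (W : normedModType R) (F : V -> W) x v :
  'D_v F x = 'D_1 (fun h : R => F (h *: v + x)) 0.
Proof.
rewrite /derive; set g1 := fun h => h^-1 *: _; set g2 := fun h => h^-1 *: _.
suff -> : g1 = g2 by [].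
by apply: funext => h; rewrite /g1 /g2 /= addr0 scale0r add0r [_%:A]mulr1.
Qed.

Lemma is_derive_comp (phi : R -> R) u x v du dphi :
  is_derive x v u du -> is_derive (u x) 1 phi dphi ->
  is_derive x v (fun y => phi (u y)) (dphi * du).
Proof.
move=> [u_der <-] [phi_der <-].
pose w h := u (h *: v + x).
have w_der : derivable w 0 1 by exact: (derivable1P u x v).1.
have w0 : w 0 = u x by rewrite /w scale0r add0r.
have phiw_der : derivable (phi \o w) 0 1.
  apply/derivable1_diffP/differentiable_comp; first exact/derivable1_diffP.
  by rewrite w0; exact/derivable1_diffP.
apply: DeriveDef; first exact: (derivable1P (fun y => phi (u y)) x v).2.
have -> : 'D_v (fun y => phi (u y)) x = 'D_1 (phi \o w) 0 by exact: derive_line.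
have phi_der' : derivable phi (w 0) 1 by rewrite w0.
by rewrite -derive1E derive1_comp // !derive1E w0 -derive_line.
Qed.

Lemma is_derive_inv u x v du : u x != 0 -> is_derive x v u du ->
  is_derive x v (fun y => (u y)^-1) (- (u x) ^- 2 * du).
Proof.
by move=> ux0 [u_der <-]; apply: DeriveDef (derivableV ux0 u_der) (deriveV ux0 u_der).
Qed.

Lemma differentiable_compR (phi : R -> R) u x :
  differentiable u x -> derivable phi (u x) 1 -> differentiable (fun y => phi (u y)) x.
Proof. by move=> u_dif /derivable1_diffP phi_dif; exact: differentiable_comp. Qed.

Lemma differentiable_row m (F : 'I_m -> V -> R) x :
  (forall j, differentiable (F j) x) -> differentiable (fun y => \row_(j < m) F j y) x.
Proof.
move=> F_dif.
have -> : (fun y => \row_(j < m) F j y) = \sum_(j < m) (fun y => F j y *: delta_mx 0 j).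
  apply: funext => y; rewrite fct_sumE; apply/rowP => i.
  rewrite summxE (bigD1 i) //= big1 => [|j ji]; rewrite !mxE eqxx /=.
    by rewrite eqxx mulr1 addr0.
  by rewrite eq_sym (negbTE ji) mulr0.
by apply: differentiable_sum => j; exact: differentiableZl.
Qed.

End DirectionalDerivatives.

Section RowDerivatives.
Variables (R : realType) (n : nat).
Implicit Types (y v c : 'rV[R]_n).

Lemma is_derive_coord y v i : is_derive y v (fun z : 'rV[R]_n => z 0 i) (v 0 i).
Proof.
have id_der : derivable id y v by exact: derivable_id.
apply: DeriveDef; first exact: (derivable_mxP _ _ _).1 id_der 0 i.
have := derive_mx id_der; rewrite derive_id => /(congr1 (fun M : 'rV[R]_n => M 0 i)).
by rewrite mxE.
Qed.

Lemma sqnormB_sum c : (fun z => sqnorm (z - c)) =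
  (fun z => \sum_(i < n) (z 0 i - c 0 i) * (z 0 i - c 0 i)).
Proof. by apply: funext => z; apply: eq_bigr => i _; rewrite !mxE expr2. Qed.

Lemma is_derive_sqnormB y v c :
  is_derive y v (fun z => sqnorm (z - c)) (2 * \sum_(i < n) (y 0 i - c 0 i) * v 0 i).
Proof.
have sq_der i : is_derive y v (fun z : 'rV[R]_n => (z 0 i - c 0 i) * (z 0 i - c 0 i))
    (2 * ((y 0 i - c 0 i) * v 0 i)).
  have diff_der : is_derive y v (fun z : 'rV[R]_n => z 0 i - c 0 i) (v 0 i - 0).
    exact: is_deriveB (is_derive_coord y v i) (is_derive_cst (c 0 i) y v).
  refine (is_derive_eq (is_deriveM diff_der diff_der) _).
  by rewrite subr0 /GRing.scale /=; ring.
rewrite sqnormB_sum mulr_sumr -fct_sumE; exact: is_derive_sum.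
Qed.

Lemma differentiable_sqnormB y c : differentiable (fun z => sqnorm (z - c)) y.
Proof.
rewrite sqnormB_sum -fct_sumE; apply: differentiable_sum => i.
have diff_dif : differentiable (fun z : 'rV[R]_n => z 0 i - c 0 i) y.
  exact: differentiableB (differentiable_coord _ 0 i) (differentiable_cst _ _).
exact: (differentiableM diff_dif diff_dif).
Qed.

Lemma sum_mul_ebasis (F : 'I_n -> R) j : \sum_(i < n) F i * ebasis j 0 i = F j.
Proof.
rewrite (bigD1 j) //= big1 => [|i ij]; rewrite /ebasis mxE.
  by rewrite !eqxx mulr1 addr0.
by rewrite (negbTE ij) andbF mulr0.
Qed.

End RowDerivatives.

Section GaussianMixture.
Variables (R : realType) (n nd : nat) (a c : R) (b : 'I_nd -> 'rV[R]_n).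
Hypotheses (a_gt0 : 0 < a) (c_gt0 : 0 < c) (nd_gt0 : (0 < nd)%N).
Implicit Types (y : 'rV[R]_n) (j : 'I_n) (k : 'I_nd) (p : 'I_nd -> 'rV[R]_n -> R).

Definition kernel k y := expR (- a * sqnorm (y - b k)).
Definition mixture y := \sum_k kernel k y.
Definition kernel_comb p y := \sum_k p k y * kernel k y.
Definition dcoef j k y := -2 * a * (y 0 j - b k 0 j).
Definition ddcoef j k y := -2 * a + dcoef j k y ^+ 2.
Definition log_mixture y := ln (c * mixture y).
Definition score j y := kernel_comb (dcoef j) y / mixture y.
Definition score_d j y := kernel_comb (ddcoef j) y / mixture y - score j y ^+ 2.

Lemma kernel_gt0 k y : 0 < kernel k y.
Proof. exact: expR_gt0. Qed.

Lemma kernel_le1 k y : kernel k y <= 1.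
Proof. by rewrite expR_le1 mulNr oppr_le0 mulr_ge0 ?sqnorm_ge0 ?ltW. Qed.

Lemma kernel_le_mixture k y : kernel k y <= mixture y.
Proof.
by rewrite /mixture (bigD1 k) //= lerDl sumr_ge0 // => i _; exact: ltW (kernel_gt0 _ _).
Qed.

Lemma mixture_gt0 y : 0 < mixture y.
Proof. exact: lt_le_trans (kernel_gt0 (Ordinal nd_gt0) y) (kernel_le_mixture _ _). Qed.

Lemma mixture_le y : mixture y <= nd%:R.
Proof.
rewrite -[nd]card_ord -sumr_const; apply: ler_sum => k _; exact: kernel_le1.
Qed.

Lemma is_derive_kernel j k y :
  is_derive y (ebasis j) (kernel k) (dcoef j k y * kernel k y).
Proof.
have exponent_der : is_derive y (ebasis j) (fun z => - a * sqnorm (z - b k))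
    (- a * (2 * (y 0 j - b k 0 j))).
  refine (is_derive_eq (is_deriveM (is_derive_cst (- a) _ _) (is_derive_sqnormB _ _ _)) _).
  by rewrite sum_mul_ebasis /GRing.scale /=; ring.
refine (is_derive_eq (is_derive_comp exponent_der (is_derive_expR _)) _).
by rewrite /dcoef /kernel; ring.
Qed.

Lemma is_derive_mixture j y :
  is_derive y (ebasis j) mixture (kernel_comb (dcoef j) y).
Proof. by rewrite /mixture -fct_sumE; apply: is_derive_sum => k; exact: is_derive_kernel. Qed.

Lemma is_derive_dcoef j k y : is_derive y (ebasis j) (dcoef j k) (-2 * a).
Proof.
refine (is_derive_eq (is_deriveM (is_derive_cst (-2 * a) _ _)
  (is_deriveB (is_derive_coord _ _ j) (is_derive_cst _ _ _))) _).
by rewrite /ebasis mxE !eqxx /GRing.scale /=; ring.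
Qed.

Lemma is_derive_kernel_comb_dcoef j y :
  is_derive y (ebasis j) (kernel_comb (dcoef j)) (kernel_comb (ddcoef j) y).
Proof.
rewrite /kernel_comb -fct_sumE; apply: is_derive_sum => k.
refine (is_derive_eq (is_deriveM (is_derive_dcoef j k y) (is_derive_kernel j k y)) _).
by rewrite /ddcoef /GRing.scale /=; ring.
Qed.

Lemma is_derive_log_mixture j y : is_derive y (ebasis j) log_mixture (score j y).
Proof.
have cmix_gt0 := mulr_gt0 c_gt0 (mixture_gt0 y).
refine (is_derive_eq (is_derive_comp
  (is_deriveM (is_derive_cst c _ _) (is_derive_mixture j y)) (is_derive1_ln cmix_gt0)) _).
have := mixture_gt0 y; rewrite /score /GRing.scale /= => mix_gt0.
by field; rewrite !gt_eqF.
Qed.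

Lemma is_derive_score j y : is_derive y (ebasis j) (score j) (score_d j y).
Proof.
have mix_neq0 : mixture y != 0 by rewrite gt_eqF // mixture_gt0.
refine (is_derive_eq (is_deriveM (is_derive_kernel_comb_dcoef j y)
  (is_derive_inv mix_neq0 (is_derive_mixture j y))) _).
by rewrite /score_d /score /GRing.scale /=; field.
Qed.

Lemma differentiable_kernel k y : differentiable (kernel k) y.
Proof.
apply: differentiable_compR; last exact: derivable_expR.
exact: (differentiableM (differentiable_cst _ _) (differentiable_sqnormB _ _)).
Qed.

Lemma differentiable_mixture y : differentiable mixture y.
Proof.
by rewrite /mixture -fct_sumE; apply: differentiable_sum => k; exact: differentiable_kernel.
Qed.

Lemma differentiable_kernel_comb p y :
  (forall k, differentiable (p k) y) -> differentiable (kernel_comb p) y.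
Proof.
move=> p_dif; rewrite /kernel_comb -fct_sumE; apply: differentiable_sum => k.
exact: (differentiableM (p_dif k) (differentiable_kernel k y)).
Qed.

Lemma differentiable_dcoef j k y : differentiable (dcoef j k) y.
Proof.
exact: (differentiableM (differentiable_cst _ _)
  (differentiableB (differentiable_coord _ 0 j) (differentiable_cst _ _))).
Qed.

Lemma differentiable_ddcoef j k y : differentiable (ddcoef j k) y.
Proof.
have dcoef_dif := differentiable_dcoef j k y.
exact: (differentiableD (differentiable_cst _ _) (differentiableM dcoef_dif dcoef_dif)).
Qed.

Lemma differentiable_log_mixture y : differentiable log_mixture y.
Proof.
apply: differentiable_compR.
  exact: (differentiableM (differentiable_cst c y) (differentiable_mixture y)).
exact/ex_derive/is_derive1_ln/mulr_gt0/mixture_gt0.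
Qed.

Lemma differentiable_score j y : differentiable (score j) y.
Proof.
apply: (differentiableM (differentiable_kernel_comb (differentiable_dcoef j ^~ y))).
by apply: differentiableV; [exact: differentiable_mixture | rewrite gt_eqF ?mixture_gt0].
Qed.

Lemma differentiable_score_d j y : differentiable (score_d j) y.
Proof.
have score_dif := differentiable_score j y.
apply: (differentiableB _ (differentiableM score_dif score_dif)).
apply: (differentiableM (differentiable_kernel_comb (differentiable_ddcoef j ^~ y))).
by apply: differentiableV; [exact: differentiable_mixture | rewrite gt_eqF ?mixture_gt0].
Qed.

Lemma norm_kernel_comb_le p y : `|kernel_comb p y| / mixture y <= \sum_k `|p k y|.
Proof.
rewrite ler_pdivrMr ?mixture_gt0 // mulr_suml.
apply: le_trans (ler_norm_sum _ _ _) _; apply: ler_sum => k _.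
rewrite normrM (gtr0_norm (kernel_gt0 k y)).
by apply: ler_wpM2l; [exact: normr_ge0 | exact: kernel_le_mixture].
Qed.

Lemma poly_bounded_kernel_comb_div p : (forall k, poly_bounded (p k)) ->
  poly_bounded (fun y => kernel_comb p y / mixture y).
Proof.
move=> p_bnd; apply: (@poly_bounded_le _ _ _ (fun y => \sum_k `|p k y|)).
  move=> y; rewrite normrM normfV (gtr0_norm (mixture_gt0 y)).
  exact: le_trans (norm_kernel_comb_le p y) (ler_norm _).
by apply: poly_bounded_sum => k; exact: poly_bounded_norm.
Qed.

Lemma poly_bounded_dcoef j k : poly_bounded (dcoef j k).
Proof.
exact: (poly_boundedM (poly_bounded_cst _ _)
  (poly_boundedB (poly_bounded_coord _ j) (poly_bounded_cst _ _))).
Qed.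

Lemma poly_bounded_score j : poly_bounded (score j).
Proof. exact: (poly_bounded_kernel_comb_div (poly_bounded_dcoef j)). Qed.

Lemma poly_bounded_score_d j : poly_bounded (score_d j).
Proof.
apply: (poly_boundedB _ (poly_boundedX 2 (poly_bounded_score j))).
apply: poly_bounded_kernel_comb_div => k.
exact: (poly_boundedD (poly_bounded_cst _ _) (poly_boundedX 2 (poly_bounded_dcoef j k))).
Qed.

(* From [c * kernel k y <= c * mixture y <= c * nd]. *)
Lemma norm_log_mixture_le k y :
  `|log_mixture y| <= `|ln c| + `|ln (c * nd%:R)| + a * sqnorm (y - b k).
Proof.
have upper : log_mixture y <= ln (c * nd%:R).
  by rewrite ler_ln ?posrE ?mulr_gt0 ?mixture_gt0 ?ltr0n // ler_wpM2l ?mixture_le ?ltW.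
have lower : ln c - a * sqnorm (y - b k) <= log_mixture y.
  rewrite (_ : _ - _ = ln (c * kernel k y)); last by rewrite lnM ?posrE ?kernel_gt0 // expRK mulNr.
  by rewrite ler_ln ?posrE ?mulr_gt0 ?mixture_gt0 ?kernel_gt0 // ler_wpM2l ?kernel_le_mixture ?ltW.
have := ler_norm (ln (c * nd%:R)); have : - ln c <= `|ln c| by rewrite -normrN ler_norm.
have := mulr_ge0 (ltW a_gt0) (sqnorm_ge0 (y - b k)).
have := normr_ge0 (ln c); have := normr_ge0 (ln (c * nd%:R)).
by rewrite ler_norml => *; apply/andP; split; lra.
Qed.

Lemma poly_bounded_log_mixture : poly_bounded log_mixture.
Proof.
pose k0 := Ordinal nd_gt0.
apply: (@poly_bounded_le _ _ _ (fun y => `|ln c| + `|ln (c * nd%:R)| + a * sqnorm (y - b k0))).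
  by move=> y; exact: le_trans (norm_log_mixture_le k0 y) (ler_norm _).
exact: (poly_boundedD (poly_bounded_cst _ _) (poly_boundedM (poly_bounded_cst _ _) (poly_bounded_sqnormB _))).
Qed.

End GaussianMixture.

Section KernelDensityEstimate.
Variables (R : realType) (nu nd : nat).
Hypothesis nd_gt0 : (0 < nd)%N.

Lemma kde_s_gt0 : 0 < kde_s R nu nd.
Proof. by rewrite powR_gt0 // divr_gt0 // mulr_gt0 ?ltr0n. Qed.

Lemma kde_shat_gt0 : 0 < kde_shat R nu nd.
Proof.
have nd_ge1 : 1 <= nd%:R :> R by rewrite ler1n.
rewrite divr_gt0 ?kde_s_gt0 // sqrtr_gt0 ltr_wpDr ?exprn_gt0 ?kde_s_gt0 //.
by rewrite divr_ge0 ?subr_ge0 ?ler0n.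
Qed.

Lemma pH_gaussian_mixture (eta : 'I_nd -> 'rV[R]_nu) :
  exists a c (b : 'I_nd -> 'rV[R]_nu),
    [/\ 0 < a, 0 < c & pH eta = fun y => c * mixture a b y].
Proof.
have sh_gt0 : 0 < kde_shat R nu nd := kde_shat_gt0.
exists (1 / (2 * kde_shat R nu nd ^+ 2)),
  (nd%:R^-1 * ((Num.sqrt (2 * pi) * kde_shat R nu nd) ^+ nu)^-1),
  (fun k => (kde_shat R nu nd / kde_s R nu nd) *: eta k); split.
- by rewrite divr_gt0 // mulr_gt0 // exprn_gt0.
- by rewrite mulr_gt0 ?invr_gt0 ?ltr0n // exprn_gt0 // mulr_gt0 // sqrtr_gt0 mulr_gt0 // pi_gt0.
apply: funext => y; rewrite /pH /mixture /kernel -[RHS]mulrA; congr (_ * _).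
by rewrite mulr_sumr.
Qed.

End KernelDensityEstimate.

Unset Implicit Arguments.
Set Strict Implicit.

Theorem proposition1 (R : realType) (nu nd : nat) (eta : 'I_nd -> 'rV[R]_nu) :
  (0 < nu)%N -> (1 < nd)%N ->
  nd%:R^-1 *: \sum_(j < nd) eta j = 0 ->
  (nd%:R - 1)^-1 *: \sum_(j < nd) ((eta j)^T *m eta j) = 1%:M ->
  let f := fun y : 'rV[R]_nu => ln (pH eta y) in
  let g := fun (j : 'I_nu) (y : 'rV[R]_nu) => 'D_(ebasis j) f y in
  let ghat := fun y : 'rV[R]_nu => enorm (\row_(j < nu) g j y) in
  let h := fun y : 'rV[R]_nu => \sum_(j < nu) 'D_(ebasis j) (g j) y in
  (* (i) *)
  (continuous f /\ in_H f) /\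
  (* (ii) *)
  ((forall (j : 'I_nu) (y : 'rV[R]_nu), derivable f y (ebasis j)) /\
   continuous (fun y : 'rV[R]_nu => \row_(j < nu) g j y) /\
   (forall j : 'I_nu, in_H (g j)) /\ in_H ghat /\
   (gauss_expect (fun y => (ghat y ^+ 4)%R) < +oo)%E) /\
  (* (iii) *)
  ((forall (j : 'I_nu) (y : 'rV[R]_nu), derivable (g j) y (ebasis j)) /\
   continuous h /\ in_H h).
Proof.
move=> _ nd_gt1 _ _ f g ghat h.
have nd_gt0 : (0 < nd)%N := ltnW nd_gt1.
have [a [c [b [a_gt0 c_gt0 pHE]]]] := pH_gaussian_mixture nd_gt0 eta.
have fE : f = log_mixture a c b by apply: funext => y; rewrite /f pHE.
have f_der j y := is_derive_log_mixture a b c_gt0 nd_gt0 j y.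
have gE j : g j = score a b j.
  by apply: funext => y; rewrite /g fE; have [_ ->] := f_der j y.
have g_der j y := is_derive_score a b nd_gt0 j y.
have hE : h = fun y => \sum_(j < nu) score_d a b j y.
  by apply: funext => y; apply: eq_bigr => j _; rewrite gE; have [_ ->] := g_der j y.
have ghat2_bnd : poly_bounded (fun y => ghat y ^+ 2).
  apply: (eq_poly_bounded _ (poly_bounded_sqr_enorm (poly_bounded_score a b nd_gt0))) => y.
  by rewrite /ghat; congr (enorm _ ^+ 2); apply/rowP => j; rewrite !mxE gE.
split; [split | split; [split; [| split; [| split; [| split]]] | split; [| split]]].
- rewrite fE => y; apply: differentiable_continuous.
  exact: (differentiable_log_mixture a b c_gt0 nd_gt0 y).
- by rewrite fE; exact: (in_H_poly_bounded (poly_bounded_log_mixture b a_gt0 c_gt0 nd_gt0)).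
- by move=> j y; rewrite fE; case: (f_der j y).
- move=> y; apply/differentiable_continuous/differentiable_row => j.
  by rewrite gE; exact: (differentiable_score a b nd_gt0 j y).
- by move=> j; rewrite gE; exact: (in_H_poly_bounded (poly_bounded_score a b nd_gt0 j)).
- by apply: gauss_expect_lty ghat2_bnd _ => y; exact: sqr_ge0.
- apply: gauss_expect_lty (eq_poly_bounded _ (poly_boundedX 2 ghat2_bnd)) _ => y.
    by rewrite -exprM.
  by rewrite (exprM _ 2 2); exact: sqr_ge0.
- by move=> j y; rewrite gE; case: (g_der j y).
- rewrite hE => y; apply: differentiable_continuous; rewrite -fct_sumE.
  by apply: differentiable_sum => j; exact: (differentiable_score_d a b nd_gt0 j y).
- rewrite hE; apply: in_H_poly_bounded; apply: poly_bounded_sum => j.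
  exact: (poly_bounded_score_d a b nd_gt0 j).
Qed.
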